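(* Let $\gamma$ be a three-mode CM satisfying $\gamma-i\tilde J_x\ge0$ for all $x\in\{0,A,B,C\}$. Then $\gamma$ is an edge CM if and only if $\gamma$ is not of the form $\gamma_A\oplus\gamma_B\oplus\gamma_C$ for one-mode CMs $\gamma_A,\gamma_B,\gamma_C$, and $K(\gamma)=\mathbb{R}^6$.
   Context: Conventions: Three modes $A,B,C$, phase-space vectors ordered mode-wise as $(q_A,p_A,q_B,p_B,q_C,p_C)$. $J_1=\begin{pmatrix}0&-1\\1&0\end{pmatrix}$, $J=J_1\oplus J_1\oplus J_1$. A CM of $n$ modes is a real symmetric $2n\times2n$ matrix $\gamma>0$ with $\gamma-iJ\ge0$. $X\ge Y$ means $X-Y$ is positive semidefinite. For $x\in\{A,B,C\}$, $\tilde J_x$ is $J$ with the $2\times2$ diagonal block of mode $x$ replaced by $-J_1$, and $\tilde J_0=J$. A three-mode CM is fully separable if there exist one-mode CMs $\gamma_A,\gamma_B,\gamma_C$ with $\gamma\ge\gamma_A\oplus\gamma_B\oplus\gamma_C$. Edge CM: a three-mode CM $\gamma$ that is not fully separable, satisfies $\gamma-i\tilde J_x\ge0$ for all $x\in\{0,A,B,C\}$, and such that for every real symmetric matrix $P\ge0$, $P\ne0$, the matrix $\gamma-P$ violates $\gamma-P-i\tilde J_x\ge0$ for some $x\in\{0,A,B,C\}$. $K(\gamma)\subseteq\mathbb{R}^6$: let $V\subseteq\mathbb{C}^6$ be the complex span of $\bigcup_{x\in\{0,A,B,C\}}\ker(\gamma-i\tilde J_x)$; $K(\gamma)$ is the real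 linear span of the real parts and imaginary parts of all vectors in $V$. *)

From HB Require Import structures.
From mathcomp Require Import all_boot all_order all_algebra.
From mathcomp Require Import reals.
From mathcomp Require Import complex.
Set Implicit Arguments. Unset Strict Implicit. Unset Printing Implicit Defensive.
Import Order.TTheory GRing.Theory Num.Theory.
Local Open Scope ring_scope.

Section Defs.
Variable R : realType.
Local Notation C := (R[i]).

Definition cmx (m n : nat) (A : 'M[R]_(m, n)) : 'M[C]_(m, n) :=
  map_mx (fun x : R => (x%:C)%C) A.

Definition iC : C := Complex 0 1.

Definition adj_c (m n : nat) (A : 'M[C]_(m, n)) : 'M[C]_(n, m) :=
  (map_mx (@conjc R) A)^T.

Definition psd_r (n : nat) (M : 'M[R]_n) : Prop :=
  forall v : 'cV[R]_n, 0 <= (v^T *m M *m v) 0 0.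

Definition pd_r (n : nat) (M : 'M[R]_n) : Prop :=
  forall v : 'cV[R]_n, v != 0 -> 0 < (v^T *m M *m v) 0 0.

(* complex positive semidefinite: v^dagger M v is real and >= 0 for every
   complex v (in the order of the numeric field R[i], 0 <= z means z is a
   nonnegative real) *)
Definition psd_c (n : nat) (M : 'M[C]_n) : Prop :=
  forall v : 'cV[C]_n, 0 <= (adj_c v *m M *m v) 0 0.

Definition mx_ge (n : nat) (X Y : 'M[R]_n) : Prop := psd_r (X - Y).

Definition dsum3 (A B D : 'M[R]_2) : 'M[R]_6 :=
  block_mx A 0 0 (block_mx B 0 0 D).

Definition J1 : 'M[R]_2 := \matrix_(i < 2, j < 2)
  (if (i == 0%N :> nat) && (j == 1%N :> nat) then -1
   else if (i == 1%N :> nat) && (j == 0%N :> nat) then 1 else 0).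

Definition Jsympl (n : nat) : 'M[R]_n.*2 :=
  \matrix_(i < n.*2, j < n.*2)
   (if (i./2 == j./2)%N then J1 (inord (odd i)) (inord (odd j)) else 0).

Definition is_CM (n : nat) (g : 'M[R]_n.*2) : Prop :=
  g^T = g /\ pd_r g /\ psd_c (cmx g - iC *: cmx (Jsympl n)).

Definition J3 : 'M[R]_6 := dsum3 J1 J1 J1.

Inductive idx := I0 | IA | IB | IC.

Definition Jt (x : idx) : 'M[R]_6 :=
  match x with
  | I0 => dsum3 J1 J1 J1
  | IA => dsum3 (- J1) J1 J1
  | IB => dsum3 J1 (- J1) J1
  | IC => dsum3 J1 J1 (- J1)
  end.

Definition ptc_cond (g : 'M[R]_6) (x : idx) : Prop :=
  psd_c (cmx g - iC *: cmx (Jt x)).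

Definition fully_separable (g : 'M[R]_6) : Prop :=
  exists gA gB gC : 'M[R]_(1%N.*2),
    [/\ is_CM gA, is_CM gB, is_CM gC & mx_ge g (dsum3 gA gB gC)].

Definition edge_CM (g : 'M[R]_6) : Prop :=
  [/\ @is_CM 3 g, ~ fully_separable g, (forall x, ptc_cond g x) &
      forall P : 'M[R]_6, P^T = P -> psd_r P -> P != 0 ->
        exists x, ~ ptc_cond (g - P) x].

(* V: complex span of the union of the kernels ker(g - i Jt x), as a row
   space (mxalgebra); a column vector v lies in ker M iff the row vector
   v^T lies in kermx M^T. *)
Definition Vspace (g : 'M[R]_6) : 'M[C]_6 :=
  (kermx (cmx g - iC *: cmx (Jt I0))^T + kermx (cmx g - iC *: cmx (Jt IA))^T
   + kermx (cmx g - iC *: cmx (Jt IB))^T + kermx (cmx g - iC *: cmx (Jt IC))^T)%MS.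

Definition in_V (g : 'M[R]_6) (v : 'cV[C]_6) : Prop := (v^T <= Vspace g)%MS.

Definition in_K (g : 'M[R]_6) (w : 'cV[R]_6) : Prop :=
  exists (k : nat) (u : 'I_k -> 'cV[C]_6) (a b : 'I_k -> R),
    (forall j, in_V g (u j)) /\
    w = \sum_(j < k) (a j *: map_mx (fun z : C => complex.Re z) (u j) + b j *: map_mx (fun z : C => complex.Im z) (u j)).

Definition K_full (g : 'M[R]_6) : Prop := forall w : 'cV[R]_6, in_K g w.

End Defs.

From HB Require Import structures.
From mathcomp Require Import all_boot all_order all_algebra.
From mathcomp Require Import reals complex ring lra.
From Stdlib Require Import Classical_Prop.
Set Implicit Arguments. Unset Strict Implicit. Unset Printing Implicit Defensive.
Import Order.TTheory GRing.Theory Num.Theory.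
Local Open Scope ring_scope.
Local Open Scope complex_scope.

(* If gamma - P satisfies the four conditions and (gamma - i J~_x) v = 0, then
   v^dagger P v <= 0, so P v = 0 by Cauchy-Schwarz; P being real, it kills the
   real and imaginary parts of V, i.e. all of K(gamma).  So when K(gamma) = R^6
   no nonzero positive semidefinite P can be removed from gamma: this is the edge
   property, and applied to P = gamma - gamma_A (+) gamma_B (+) gamma_C (one-mode
   CMs satisfy all four conditions) it shows that gamma is fully separable only
   if it is a product.  Conversely, a real w <> 0 orthogonal to K(gamma) lies in
   the range of every Hermitian gamma - i J~_x, and then P = eps w w^T can be
   removed for small eps > 0. *)

Lemma discriminant_le (R : realFieldType) (a F N : R) : 0 <= a -> 0 <= N ->
  (forall r, 0 <= F - 2 * r * N + r ^+ 2 * N * a) -> N <= a * F.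
Proof.
move=> a0 N0 hq; have [a_eq0|a_neq0] := eqVneq a 0.
  move: hq; rewrite a_eq0 mul0r => hq.
  have [->//|N_neq0] := eqVneq N 0.
  have := hq ((F + 1) / (2 * N)).
  have -> : F - 2 * ((F + 1) / (2 * N)) * N + ((F + 1) / (2 * N)) ^+ 2 * N * 0 = - 1.
    by field.
  by rewrite oppr_ge0 ler10.
have := hq a^-1.
have -> : F - 2 * a^-1 * N + a^-1 ^+ 2 * N * a = a^-1 * (a * F - N) by field.
by rewrite pmulr_rge0 ?invr_gt0 ?lt_def ?a_neq0 // subr_ge0.
Qed.

Section Complexification.
Variable R : realType.
Local Notation C := R[i].
Implicit Types m n p : nat.

Lemma cmx0 m n : cmx (0 : 'M[R]_(m, n)) = 0.
Proof. exact: map_mx0. Qed.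
Lemma cmxB m n (A B : 'M[R]_(m, n)) : cmx (A - B) = cmx A - cmx B.
Proof. exact: map_mxB. Qed.
Lemma cmxN m n (A : 'M[R]_(m, n)) : cmx (- A) = - cmx A.
Proof. exact: map_mxN. Qed.
Lemma cmxM m n p (A : 'M[R]_(m, n)) (B : 'M[R]_(n, p)) : cmx (A *m B) = cmx A *m cmx B.
Proof. exact: map_mxM. Qed.
Lemma cmxZ m n a (A : 'M[R]_(m, n)) : cmx (a *: A) = a%:C *: cmx A.
Proof. by apply/matrixP=> i j; rewrite !mxE rmorphM. Qed.
Lemma conjmxK m n (A : 'M[C]_(m, n)) :
  map_mx (@conjc R) (map_mx (@conjc R) A) = A.
Proof. by apply/matrixP=> i j; rewrite !mxE conjcK. Qed.
Lemma conjmx_cmx m n (A : 'M[R]_(m, n)) : map_mx (@conjc R) (cmx A) = cmx A.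
Proof. by apply/matrixP=> i j; rewrite !mxE conjc_real. Qed.
Lemma cmx_tr m n (A : 'M[R]_(m, n)) : cmx A^T = (cmx A)^T.
Proof. by apply/matrixP=> i j; rewrite !mxE. Qed.

Lemma adj_cD m n (A B : 'M[C]_(m, n)) : adj_c (A + B) = adj_c A + adj_c B.
Proof. by rewrite /adj_c map_mxD linearD. Qed.
Lemma adj_cN m n (A : 'M[C]_(m, n)) : adj_c (- A) = - adj_c A.
Proof. by rewrite /adj_c map_mxN linearN. Qed.
Lemma adj_cZ m n a (A : 'M[C]_(m, n)) : adj_c (a *: A) = a^*%C *: adj_c A.
Proof. by apply/matrixP=> i j; rewrite !mxE rmorphM. Qed.
Lemma adj_cM m n p (A : 'M[C]_(m, n)) (B : 'M[C]_(n, p)) :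
  adj_c (A *m B) = adj_c B *m adj_c A.
Proof. by rewrite /adj_c map_mxM trmx_mul. Qed.
Lemma adj_cK m n (A : 'M[C]_(m, n)) : adj_c (adj_c A) = A.
Proof. by apply/matrixP=> i j; rewrite !mxE conjcK. Qed.
Lemma adj_c_cmx m n (A : 'M[R]_(m, n)) : adj_c (cmx A) = cmx A^T.
Proof. by apply/matrixP=> i j; rewrite !mxE conjc_real. Qed.

Definition Remx m n (A : 'M[C]_(m, n)) := map_mx (fun z : C => complex.Re z) A.
Definition Immx m n (A : 'M[C]_(m, n)) := map_mx (fun z : C => complex.Im z) A.

Lemma conjc_i : 'i^*%C = - 'i :> C.
Proof. by apply/eqP; rewrite eq_complex /= oppr0 !eqxx. Qed.

Lemma ge0_complex (z : C) : 0 <= z -> z = (complex.Re z)%:C /\ 0 <= complex.Re z.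
Proof. by case: z => x y; rewrite lecE /= => /andP[/eqP -> ->]. Qed.

Lemma cmx_ReIm m n (A : 'M[C]_(m, n)) : A = cmx (Remx A) + 'i *: cmx (Immx A).
Proof. by apply/matrixP=> i j; rewrite !mxE [LHS]complexE. Qed.

Lemma cmx_ReIm_eq0 m n (A B : 'M[R]_(m, n)) :
  cmx A + 'i *: cmx B = 0 -> A = 0 /\ B = 0.
Proof.
move=> /matrixP AB0; split; apply/matrixP=> i j; have := AB0 i j;
  rewrite !mxE => /eqP; rewrite eq_complex /= !(mul0r, mulr0, mul1r, subr0, addr0, add0r);
  by case/andP=> /eqP ? /eqP ?.
Qed.

End Complexification.

Section HermitianForms.
Variables (R : realType) (n : nat).
Local Notation C := R[i].
Implicit Types (M N : 'M[C]_n) (u v w : 'cV[C]_n).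

Definition hform M u v : C := (adj_c u *m M *m v) 0 0.

Definition hermitian M := adj_c M = M.

Lemma hformDl M u v w : hform M (u + v) w = hform M u w + hform M v w.
Proof. by rewrite /hform adj_cD !mulmxDl mxE. Qed.
Lemma hformDr M u v w : hform M u (v + w) = hform M u v + hform M u w.
Proof. by rewrite /hform mulmxDr mxE. Qed.
Lemma hformNl M u v : hform M (- u) v = - hform M u v.
Proof. by rewrite /hform adj_cN !mulNmx mxE. Qed.
Lemma hformNr M u v : hform M u (- v) = - hform M u v.
Proof. by rewrite /hform mulmxN mxE. Qed.
Lemma hformZl M c u v : hform M (c *: u) v = c^*%C * hform M u v.
Proof. by rewrite /hform adj_cZ -!scalemxAl mxE. Qed.
Lemma hformZr M c u v : hform M u (c *: v) = c * hform M u v.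
Proof. by rewrite /hform -scalemxAr mxE. Qed.
Lemma hformBm M N u v : hform (M - N) u v = hform M u v - hform N u v.
Proof. by rewrite /hform mulmxBr mulmxBl !mxE. Qed.

Lemma hform_conj M u v : hermitian M -> hform M v u = (hform M u v)^*%C.
Proof.
move=> hM; have -> : (hform M u v)^*%C = adj_c (adj_c u *m M *m v) 0 0.
  by rewrite /hform !mxE.
by rewrite !adj_cM adj_cK hM mulmxA.
Qed.

Lemma hform_mulmx M u v : hform M u v = (adj_c u *m (M *m v)) 0 0.
Proof. by rewrite /hform mulmxA. Qed.

Lemma psd_CauchySchwarz M u v : hermitian M -> psd_c M ->
  hform M u v * (hform M u v)^*%C <= hform M u u * hform M v v.
Proof.
move=> hM psdM; set b := hform M u v.
have [ea a0] := ge0_complex (psdM u : 0 <= hform M u u).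
have [eF F0] := ge0_complex (psdM v : 0 <= hform M v v).
have [eN N0] := ge0_complex (mulcJ_ge0 b).
rewrite eN ea eF -rmorphM lecR; apply: discriminant_le => // r.
have := psdM (v - r%:C *: (b *: u)).
rewrite -/(hform _ _ _) !(hformDl, hformDr, hformNl, hformNr, hformZl, hformZr).
rewrite (hform_conj u v hM) -/b conjc_real => /ge0_complex[eX X0].
apply: le_trans X0 _; rewrite le_eqVlt; apply/orP; left.
apply/eqP/complexI; rewrite -eX.
rewrite !(rmorphD, rmorphN, rmorphM, rmorph_nat) /= -ea -eF -eN.
ring.
Qed.

Lemma psd_hform_eq0 M v : hermitian M -> psd_c M -> hform M v v = 0 -> M *m v = 0.
Proof.
move=> hM psdM Mv0; apply/matrixP=> i j; rewrite (ord1 j) [RHS]mxE.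
have := psd_CauchySchwarz (delta_mx i 0) v hM psdM; rewrite Mv0 mulr0.
have -> : hform M (delta_mx i 0) v = (M *m v) i 0.
  rewrite hform_mulmx (_ : adj_c _ = delta_mx 0 i) -?rowE ?mxE //.
  by apply/matrixP=> k l; rewrite !mxE rmorph_nat andbC.
set z := (M *m v) i 0 => le0.
have : z * z^*%C == 0 by rewrite eq_le le0 mulcJ_ge0.
by rewrite mulf_eq0 conjc_eq0 orbb => /eqP.
Qed.

Lemma psd_tr M : psd_c M -> psd_c M^T.
Proof.
move=> psdM v; have : 0 <= hform M (map_mx (@conjc R) v) (map_mx (@conjc R) v) := psdM _.
suff -> : hform M (map_mx (@conjc R) v) (map_mx (@conjc R) v) = hform M^T v v by [].
rewrite /hform /adj_c conjmxK -[in LHS](trmxK (v^T *m M *m _)) mxE.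
by rewrite !trmx_mul trmxK mulmxA.
Qed.

Lemma hform_cmx (P : 'M[R]_n) (x y : 'cV[R]_n) :
  hform (cmx P) (cmx x) (cmx y) = ((x^T *m P *m y) 0 0)%:C.
Proof. by rewrite /hform adj_c_cmx -!cmxM mxE. Qed.

Lemma sym_quad_form (P : 'M[R]_n) (x y : 'cV[R]_n) : P^T = P ->
  (x^T *m P *m y) 0 0 = (y^T *m P *m x) 0 0.
Proof.
move=> sP; rewrite -[in LHS](trmxK (x^T *m P *m y)) mxE.
by rewrite !trmx_mul trmxK sP mulmxA.
Qed.

Lemma psd_cmx (P : 'M[R]_n) : P^T = P -> psd_r P -> psd_c (cmx P).
Proof.
move=> sP psdP v; rewrite -/(hform _ v v) (cmx_ReIm v).
set x := Remx v; set y := Immx v.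
rewrite !(hformDl, hformDr, hformZl, hformZr) !hform_cmx (sym_quad_form y x sP).
rewrite conjc_i.
set a := (x^T *m P *m x) 0 0; set b := (x^T *m P *m y) 0 0.
set c := (y^T *m P *m y) 0 0.
have -> : - 'i * ('i * c%:C) = c%:C.
  by rewrite mulrA mulNr -expr2 sqr_i opprK mul1r.
by rewrite mulNr addrA addrK -rmorphD ler0c addr_ge0 ?psdP.
Qed.

Lemma hermitian_cmx (P : 'M[R]_n) : P^T = P -> hermitian (cmx P).
Proof. by move=> sP; rewrite /hermitian adj_c_cmx sP. Qed.

Lemma psd_sub_ker (P : 'M[R]_n) M v : P^T = P -> psd_r P ->
  psd_c (M - cmx P) -> M *m v = 0 -> cmx P *m v = 0.
Proof.
move=> sP psdP psdMP Mv0; have psdcP := psd_cmx sP psdP.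
apply: (psd_hform_eq0 (hermitian_cmx sP) psdcP).
have : 0 <= hform (M - cmx P) v v := psdMP v.
rewrite hformBm hform_mulmx Mv0 mulmx0 mxE sub0r oppr_ge0 => le0.
by apply/eqP; rewrite eq_le le0; exact: psdcP.
Qed.

(* For real w, bilinear orthogonality to the rows of kermx M^T is Hermitian
   orthogonality to ker M, whose orthogonal complement is the range of M. *)
Lemma hermitian_range M (w : 'cV[R]_n) : hermitian M ->
  kermx M^T *m cmx w = 0 -> exists u, cmx w = M *m u.
Proof.
move=> hM ker_w; have MT : M^T = map_mx (@conjc R) M by rewrite -{1}hM trmxK.
suff /submxP[D eD] : ((cmx w)^T <= M^T)%MS.
  by exists D^T; rewrite -[cmx w]trmxK eD trmx_mul trmxK.
rewrite submxE; set Q := cokermx M^T.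
have QM : Q^T *m M = 0 by rewrite -[M]trmxK -trmx_mul mulmx_coker trmx0.
have /submxP[D eD] : ((map_mx (@conjc R) Q)^T <= kermx M^T)%MS.
  by apply/sub_kermxP; rewrite MT map_trmx -map_mxM QM map_mx0.
have : map_mx (@conjc R) ((map_mx (@conjc R) Q)^T *m cmx w) = 0.
  by rewrite eD -mulmxA ker_w mulmx0 map_mx0.
rewrite map_mxM map_trmx /= conjmxK conjmx_cmx => QTw.
by rewrite -trmx_eq0 trmx_mul trmxK QTw.
Qed.

Lemma psd_sub_rank1 M (w : 'cV[R]_n) u (e : R) : hermitian M -> psd_c M ->
  cmx w = M *m u -> 0 <= e -> e%:C * hform M u u <= 1 ->
  psd_c (M - cmx (e *: (w *m w^T))).
Proof.
move=> hM psdM wMu e0 he v; rewrite -/(hform _ v v) hformBm.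
have -> : hform (cmx (e *: (w *m w^T))) v v = e%:C * (hform M v u * hform M u v).
  have wT : (cmx w)^T = adj_c u *m M by rewrite -conjmx_cmx -/(adj_c _) wMu adj_cM hM.
  rewrite /hform cmxZ cmxM cmx_tr wT wMu -scalemxAr -scalemxAl mxE; congr (_ * _).
  have -> : adj_c v *m (M *m u *m (adj_c u *m M)) *m v
      = (adj_c v *m M *m u) *m (adj_c u *m M *m v) by rewrite !mulmxA.
  by rewrite mxE big_ord1.
rewrite (hform_conj u v hM) [_^*%C * _]mulrC.
rewrite subr_ge0; have e0C : 0 <= e%:C by rewrite ler0c.
apply: le_trans (ler_wpM2l e0C (psd_CauchySchwarz u v hM psdM)) _.
by rewrite mulrA -[leRHS]mul1r ler_wpM2r //; exact: psdM.
Qed.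

Lemma psd_sub_rank1_small M (w : 'cV[R]_n) : hermitian M -> psd_c M ->
  kermx M^T *m cmx w = 0 ->
  exists2 e : R, 0 < e & forall t, 0 <= t <= e -> psd_c (M - cmx (t *: (w *m w^T))).
Proof.
move=> hM psdM ker_w; have [u wMu] := hermitian_range hM ker_w.
have [ea a0] := ge0_complex (psdM u : 0 <= hform M u u).
set a := complex.Re (hform M u u) in ea a0 *.
have a1_gt0 : 0 < 1 + a by rewrite ltr_wpDr.
exists (1 + a)^-1 => [|t /andP[t0 te]]; first by rewrite invr_gt0.
apply: psd_sub_rank1 hM psdM wMu t0 _.
rewrite ea -rmorphM -(rmorph1 (real_complex R)) lecR.
move: te; rewrite -div1r ler_pdivlMr //; nra.
Qed.

End HermitianForms.

Section BlockDiagonal.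
Variable R : realType.
Local Notation C := R[i].

Lemma psd_block_diag m n (A : 'M[C]_m) (B : 'M[C]_n) :
  psd_c A -> psd_c B -> psd_c (block_mx A 0 0 B).
Proof.
move=> psdA psdB v; rewrite -[v]vsubmxK.
have -> : adj_c (col_mx (usubmx v) (dsubmx v))
    = row_mx (adj_c (usubmx v)) (adj_c (dsubmx v)).
  by rewrite /adj_c map_col_mx tr_col_mx.
rewrite mul_row_block !mulmx0 addr0 add0r mul_row_col mxE.
exact: addr_ge0 (psdA _) (psdB _).
Qed.

Lemma cmx_subZ_block m n (A A' : 'M[R]_m) (B B' : 'M[R]_n) :
  cmx (block_mx A 0 0 B) - 'i *: cmx (block_mx A' 0 0 B') =
  block_mx (cmx A - 'i *: cmx A') 0 0 (cmx B - 'i *: cmx B').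
Proof.
rewrite /cmx !map_block_mx !map_mx0 scale_block_mx opp_block_mx add_block_mx.
by rewrite !scaler0 !oppr0 !addr0.
Qed.

End BlockDiagonal.

Section CovarianceMatrices.
Variable R : realType.
Local Notation C := R[i].
Implicit Types (g P : 'M[R]_6) (x : idx).

Definition ptc_mx g x : 'M[C]_6 := cmx g - iC R *: cmx (Jt R x).

Lemma J1_tr : (J1 R)^T = - J1 R.
Proof.
apply/matrixP=> i j; rewrite !mxE.
by case: i => [[|[|i]] Hi] //; case: j => [[|[|j]] Hj] //=; rewrite ?oppr0 ?opprK.
Qed.

Lemma dsum3_tr (a b c : 'M[R]_2) : (dsum3 a b c)^T = dsum3 a^T b^T c^T.
Proof.
rewrite /dsum3; set T := (X in X^T).
by rewrite -[T^T]/((T : 'M_(2 + (2 + 2)))^T) /T !tr_block_mx !trmx0.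
Qed.

Lemma dsum3N (a b c : 'M[R]_2) : - dsum3 a b c = dsum3 (- a) (- b) (- c).
Proof.
rewrite /dsum3; set T := block_mx a _ _ _.
by rewrite -[- T]/(- (T : 'M_(2 + (2 + 2)))) /T !opp_block_mx !oppr0.
Qed.

Lemma Jt_tr x : (Jt R x)^T = - Jt R x.
Proof. by case: x; rewrite /= dsum3_tr dsum3N ?raddfN /= J1_tr ?opprK. Qed.

Lemma ptc_mx_hermitian g x : g^T = g -> hermitian (ptc_mx g x).
Proof.
move=> sg; rewrite /hermitian /ptc_mx adj_cD adj_cN adj_cZ !adj_c_cmx sg Jt_tr.
by rewrite conjc_i cmxN scaleNr scalerN opprK.
Qed.

Lemma ptc_mx_subr g P x : ptc_mx (g - P) x = ptc_mx g x - cmx P.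
Proof. by rewrite /ptc_mx cmxB addrAC. Qed.

Lemma psd_ptc_dsum3 (a b c a' b' c' : 'M[R]_2) :
  psd_c (cmx a - iC R *: cmx a') -> psd_c (cmx b - iC R *: cmx b') ->
  psd_c (cmx c - iC R *: cmx c') ->
  psd_c (cmx (dsum3 a b c) - iC R *: cmx (dsum3 a' b' c')).
Proof.
move=> psda psdb psdc.
have := psd_block_diag psda (psd_block_diag psdb psdc).
by rewrite -!cmx_subZ_block.
Qed.

Lemma CM1_ptc (a : 'M[R]_2) : @is_CM R 1 a ->
  psd_c (cmx a - iC R *: cmx (J1 R)) /\ psd_c (cmx a - iC R *: cmx (- J1 R)).
Proof.
case=> sa [_ psda].
have J1E : Jsympl R 1 = J1 R.
  apply/matrixP=> i j; rewrite !mxE.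
  by case: i => [[|[|i]] Hi] //; case: j => [[|[|j]] Hj] //=; rewrite !inordK.
rewrite J1E in psda; split; first exact: psda.
suff -> : cmx a - iC R *: cmx (- J1 R) = (cmx a - iC R *: cmx (J1 R))^T.
  exact: psd_tr.
by rewrite [RHS]raddfB /= [(_ *: _)^T]linearZ /= -!cmx_tr sa J1_tr.
Qed.

Lemma dsum3_ptc (a b c : 'M[R]_2) x :
  @is_CM R 1 a -> @is_CM R 1 b -> @is_CM R 1 c -> ptc_cond (dsum3 a b c) x.
Proof.
move=> /CM1_ptc[a1 a2] /CM1_ptc[b1 b2] /CM1_ptc[c1 c2].
by case: x; apply: psd_ptc_dsum3.
Qed.

End CovarianceMatrices.

Section RankOne.
Variables (R : realType) (n : nat).

Lemma rank1_sym (w : 'cV[R]_n) : (w *m w^T)^T = w *m w^T.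
Proof. by rewrite trmx_mul trmxK. Qed.

Lemma psd_rank1 (w : 'cV[R]_n) : psd_r (w *m w^T).
Proof.
move=> v; have -> : v^T *m (w *m w^T) *m v = (v^T *m w) *m (v^T *m w)^T.
  by rewrite trmx_mul trmxK !mulmxA.
by rewrite mxE big_ord1 [_^T _ _]mxE -expr2 sqr_ge0.
Qed.

Lemma rank1_neq0 (w : 'cV[R]_n) : w != 0 -> w *m w^T != 0.
Proof.
move=> w0; have [i wi0] : exists i, w i 0 != 0.
  apply/existsP; apply: contraR w0 => /existsPn wi0.
  by apply/eqP/matrixP=> i j; rewrite (ord1 j) mxE; apply/eqP/negPn/wi0.
apply: contraNneq wi0 => /matrixP/(_ i i); rewrite !mxE big_ord1 !mxE => /eqP.
by rewrite mulf_eq0 orbb.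
Qed.

End RankOne.

Section Kspace.
Variable R : realType.
Local Notation C := R[i].
Implicit Types (g P : 'M[R]_6).

Lemma ker_ptc_sub_Vspace g x : (kermx (ptc_mx g x)^T <= Vspace g)%MS.
Proof.
rewrite /Vspace; case: x; last exact: addsmxSr;
  apply: submx_trans (addsmxSl _ _); last exact: addsmxSr;
  apply: submx_trans (addsmxSl _ _); [exact: addsmxSl | exact: addsmxSr].
Qed.

Lemma Vspace_sub g m (M : 'M[C]_(m, 6)) :
  (forall x, (kermx (ptc_mx g x)^T <= M)%MS) -> (Vspace g <= M)%MS.
Proof.
move=> h; rewrite /Vspace !addsmx_sub.
by do ?[apply/andP; split]; apply: h.
Qed.

Definition Kmx g : 'M[R]_(6 + 6, 6) := col_mx (Remx (Vspace g)) (Immx (Vspace g)).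

Lemma row_full_K_full g : row_full (Kmx g) -> K_full g.
Proof.
move=> Kfull w; have /submxP[D eD] : (w^T <= Kmx g)%MS by apply: submx_full.
exists 6, (fun j => (row j (Vspace g))^T), (fun j => lsubmx D 0 j), (fun j => rsubmx D 0 j).
split=> [j|]; first by rewrite /in_V trmxK row_sub.
rewrite -[w]trmxK eD -{1}[D]hsubmxK mul_row_col.
apply/matrixP => i k; rewrite (ord1 k) summxE !mxE -big_split /=.
by apply: eq_bigr => j _; rewrite !mxE.
Qed.

Lemma not_K_full_orthogonal g : ~ K_full g ->
  exists2 w : 'cV[R]_6, w != 0 & forall x, kermx (ptc_mx g x)^T *m cmx w = 0.
Proof.
move=> notK; have : cokermx (Kmx g) != 0.
  by rewrite cokermx_eq0; apply/negP => /row_full_K_full.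
set Q := cokermx (Kmx g) => Q0.
have [j Qj0] : exists j, col j Q != 0.
  apply/existsP; apply: contraR Q0 => /existsPn Qj0.
  by apply/eqP/matrixP=> i j; move/eqP/matrixP: (negPn (Qj0 j)) => /(_ i 0); rewrite !mxE.
exists (col j Q) => // x.
have : Kmx g *m col j Q = 0 by rewrite colE mulmxA mulmx_coker mul0mx.
rewrite /Kmx mul_col_mx => /eqP; rewrite col_mx_eq0 => /andP[/eqP ReQ /eqP ImQ].
have VQ : Vspace g *m cmx (col j Q) = 0.
  by rewrite {1}(cmx_ReIm (Vspace g)) mulmxDl -scalemxAl -!cmxM ReQ ImQ cmx0 scaler0 addr0.
by case/submxP: (ker_ptc_sub_Vspace g x) => D ->; rewrite -mulmxA VQ mulmx0.
Qed.

Lemma Vspace_sub_ker_psd g P : P^T = P -> psd_r P ->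
  (forall x, ptc_cond (g - P) x) -> (Vspace g <= kermx (cmx P)^T)%MS.
Proof.
move=> sP psdP ptcP; apply: Vspace_sub => x.
apply/sub_kermxP/row_matrixP => i; rewrite row_mul row0.
have /sub_kermxP : (row i (kermx (ptc_mx g x)^T) <= kermx (ptc_mx g x)^T)%MS.
  exact: row_sub.
move/(congr1 trmx); rewrite trmx_mul trmxK trmx0 => ker_i.
have := psd_sub_ker sP psdP _ ker_i.
rewrite -ptc_mx_subr => /(_ (ptcP x))/(congr1 trmx).
by rewrite trmx_mul trmxK trmx0.
Qed.

Lemma K_full_psd_sub_eq0 g P : P^T = P -> psd_r P -> K_full g ->
  (forall x, ptc_cond (g - P) x) -> P = 0.
Proof.
move=> sP psdP Kg ptcP; have VP := Vspace_sub_ker_psd sP psdP ptcP.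
have PV u : in_V g u -> P *m Remx u = 0 /\ P *m Immx u = 0.
  move=> /submx_trans/(_ VP)/sub_kermxP/(congr1 trmx).
  rewrite trmx_mul !trmxK trmx0 {1}(cmx_ReIm u) mulmxDr -scalemxAr -!cmxM.
  exact: cmx_ReIm_eq0.
have Pw (w : 'cV[R]_6) : P *m w = 0.
  have [k [u [a [b [Vu ->]]]]] := Kg w; rewrite mulmx_sumr big1 // => j _.
  have [Re0 Im0] := PV _ (Vu j).
  by rewrite mulmxDr -!scalemxAr -/(Remx _) -/(Immx _) Re0 Im0 !scaler0 addr0.
apply/matrixP=> i j; have /matrixP/(_ i 0) := Pw (delta_mx j 0).
by rewrite -colE !mxE.
Qed.

End Kspace.

Lemma idx_common_bound (R : realType) (Q : idx -> R -> Prop) :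
  (forall x, exists2 e, 0 < e & forall t, 0 <= t <= e -> Q x t) ->
  exists2 e, 0 < e & forall x, Q x e.
Proof.
move=> h; have [e0 e0_gt0 Q0] := h I0; have [eA eA_gt0 QA] := h IA.
have [eB eB_gt0 QB] := h IB; have [eC eC_gt0 QC] := h IC.
set e := Num.min e0 (Num.min eA (Num.min eB eC)).
have e_gt0 : 0 < e by rewrite !lt_min; apply/and4P.
exists e => // -[]; [apply: Q0 | apply: QA | apply: QB | apply: QC];
  by rewrite (ltW e_gt0) !ge_min ?lexx ?orbT.
Qed.

Lemma not_K_full_psd_sub_eq0 (R : realType) (g : 'M[R]_6) :
  g^T = g -> (forall x, ptc_cond g x) -> ~ K_full g ->
  exists P : 'M[R]_6, [/\ P^T = P, psd_r P, P != 0 & forall x, ptc_cond (g - P) x].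
Proof.
move=> sg ptcg notK; have [w w0 ker_w] := not_K_full_orthogonal notK.
have [e e_gt0 ptce] : exists2 e : R, 0 < e & forall x, ptc_cond (g - e *: (w *m w^T)) x.
  apply: idx_common_bound => x.
  have [e e_gt0 he] := psd_sub_rank1_small (ptc_mx_hermitian x sg) (ptcg x) (ker_w x).
  by exists e => // t te; rewrite /ptc_cond -/(ptc_mx _ x) ptc_mx_subr; apply: he.
exists (e *: (w *m w^T)); split=> //.
- by rewrite linearZ /= rank1_sym.
- move=> v; rewrite -scalemxAr -scalemxAl mxE.
  exact: mulr_ge0 (ltW e_gt0) (psd_rank1 w v).
- by rewrite scalemx_eq0 negb_or gt_eqF // rank1_neq0.
Qed.

Unset Implicit Arguments.
Local Close Scope complex_scope.

Theorem theorem4 (R : realType) (g : 'M[R]_6) :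
  @is_CM R 3 g -> (forall x : idx, ptc_cond g x) ->
  (edge_CM g <->
   ((~ exists gA gB gC : 'M[R]_(1%N.*2),
         [/\ is_CM gA, is_CM gB, is_CM gC & g = dsum3 gA gB gC])
    /\ K_full g)).
Proof.
move=> CMg ptcg; have sg : g^T = g := CMg.1.
split=> [[_ notsep _ edge] | [notprod Kg]].
  split.
    case=> a [b [c [CMa CMb CMc gE]]]; apply: notsep; exists a, b, c; split=> //.
    by rewrite -gE /mx_ge subrr => v; rewrite mulmx0 mul0mx mxE.
  apply: NNPP => notK; have [P [sP psdP P0 ptcP]] := not_K_full_psd_sub_eq0 sg ptcg notK.
  by have [x] := edge P sP psdP P0; apply.
split=> //.
  case=> a [b [c [CMa CMb CMc ge_g]]]; apply: notprod; exists a, b, c; split=> //.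
  apply/eqP; rewrite -subr_eq0; apply/eqP; apply: K_full_psd_sub_eq0 ge_g Kg _ => [|x].
    by rewrite raddfB /= sg dsum3_tr CMa.1 CMb.1 CMc.1.
  by rewrite subKr; apply: dsum3_ptc.
move=> P sP psdP P0; apply: NNPP => noviol; move/eqP: P0; apply.
apply: K_full_psd_sub_eq0 sP psdP Kg _ => x; apply: NNPP => nptc.
by apply: noviol; exists x.
Qed.
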